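(* Let $A\subset\mathbf{Z}$ be a finite set with $0\in A$, $N=\#A\geq 2$, all elements non-negative, and $A(x)=\sum_{a\in A}x^a$. (i) If $A(x)$ satisfies conditions (T1) and (T2), then $A(x)$ has a spectrum. (ii) If $A(x)$ has a spectrum $\{\theta_1,\dots,\theta_{N-1}\}\subset p^{-\alpha}\mathbf{Z}$, where $p$ is a prime and $\alpha\in\mathbf{N}$, then $N$ is a power of $p$ and (T1) holds.
   Context: For $s\geq 1$, $\Phi_s(x)$ denotes the $s$-th cyclotomic polynomial, $\Phi_s(x)=\prod(x-\epsilon)$ over the primitive $s$-th roots of unity $\epsilon$. $S_A$ is the set of prime powers $s$ (i.e. $s=p^\beta$ with $p$ prime, $\beta\geq1$) such that $\Phi_s(x)$ divides $A(x)$. Condition (T1): $A(1)=\prod_{s\in S_A}\Phi_s(1)$. Condition (T2): if $s_1,\dots,s_k\in S_A$ are powers of pairwise distinct primes, then $\Phi_{s_1s_2\cdots s_k}(x)$ divides $A(x)$. A set $\{\theta_1,\dots,\theta_{N-1}\}\subset(0,1)$ is called a spectrum for $A(x)$ if the $\theta_j$ are pairwise distinct and, with $\theta_0=0$, $A(e^{2\pi i(\theta_i-\theta_j)})=0$ for all $0\leq i,j\leq N-1$ with $i\neq j$. *)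

From HB Require Import structures.
From mathcomp Require Import all_boot all_order all_algebra all_field.
From mathcomp Require Import complex.
From mathcomp Require Import reals trigo.
Set Implicit Arguments. Unset Strict Implicit. Unset Printing Implicit Defensive.
Import Order.TTheory GRing.Theory Num.Theory.
Local Open Scope ring_scope.

(* A finite set A of non-negative integers is represented by a duplicate-free
   list of natural numbers. *)

Definition Apoly (A : seq nat) : {poly int} := \sum_(a <- A) 'X^a.

Definition prime_power (s : nat) : Prop :=
  exists p beta : nat, [/\ prime p, (0 < beta)%N & s = (p ^ beta)%N].

Definition in_SA (A : seq nat) (s : nat) : Prop :=
  prime_power s /\ ('Phi_s %| Apoly A)%R.

(* (T1): A(1) = prod_{s in S_A} Phi_s(1)  (S_A is finite; we enumerate it
   by a duplicate-free list S) *)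
Definition T1 (A : seq nat) : Prop :=
  exists S : seq nat, [/\ uniq S, (forall s, s \in S <-> in_SA A s) &
     (Apoly A).[1] = \prod_(s <- S) ('Phi_s).[1]].

Definition T2 (A : seq nat) : Prop :=
  forall pb : seq (nat * nat),
    pb != [::] -> uniq (map fst pb) ->
    (forall x, x \in pb -> [/\ prime x.1, (0 < x.2)%N & in_SA A (x.1 ^ x.2)%N]) ->
    ('Phi_(\prod_(x <- pb) (x.1 ^ x.2)%N) %| Apoly A)%R.

Definition expi (R : realType) (t : R) : R[i] :=
  (cos (2 * pi * t) +i* sin (2 * pi * t))%C.

Definition Aeval (R : realType) (A : seq nat) (z : R[i]) : R[i] :=
  \sum_(a <- A) z ^+ a.

Definition is_spectrum (R : realType) (A : seq nat) (th : seq R) : Prop :=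
  [/\ size th = (size A).-1, uniq th,
      (forall t, t \in th -> 0 < t < 1) &
      (forall i j : nat, (i < size A)%N -> (j < size A)%N -> i != j ->
        Aeval A (expi (nth 0 (0 :: th) i - nth 0 (0 :: th) j)) = 0)].

Definition has_spectrum (R : realType) (A : seq nat) : Prop :=
  exists th : seq R, is_spectrum A th.

(* (i) Every s in S_A is a power of a prime p_s, and (T1) says N = prod_s p_s.
   Take as spectrum the fractional parts of sum_s c_s / s over the digit
   vectors 0 <= c_s < p_s.  For two distinct vectors, e(theta - theta') is a
   primitive root of unity whose order is the product, over the primes p at
   which the vectors differ, of the largest p-power s in S_A at which they
   differ; by (T2) the cyclotomic polynomial of that order divides A, so
   e(theta - theta') is a root of A.
   (ii) Write theta_j = n_j / p^alpha.  Then e(theta_i - theta_j) is a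
   primitive root of order p^(alpha - v), v the first base-p digit at which n_i
   and n_j differ, so Phi_(p^(alpha - v)) divides A.  The digits at such levels
   v thus separate the N points, and N <= p^#levels; conversely the distinct
   factors Phi_(p^(alpha - v)) of A give
   p^#levels | prod_(s in S_A) Phi_s(1) | A(1) = N.  Hence N = p^#levels and
   (T1) holds. *)

From HB Require Import structures.
From mathcomp Require Import all_boot all_order all_algebra all_field.
From mathcomp Require Import complex.
From mathcomp Require Import reals trigo.
From mathcomp Require Import ring lra zify.
Set Implicit Arguments. Unset Strict Implicit. Unset Printing Implicit Defensive.
Import Order.TTheory GRing.Theory Num.Theory.
Local Open Scope ring_scope.

Section Expi.
Variable R : realType.

Lemma expi0 : expi (0 : R) = 1.
Proof. by rewrite /expi mulr0 cos0 sin0. Qed.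

Lemma expiD (x y : R) : expi (x + y) = expi x * expi y.
Proof. by rewrite /expi mulrDr cosD sinD /=; congr (Complex _ _); rewrite addrC. Qed.

Lemma expi_sum (I : Type) (r : seq I) (f : I -> R) :
  expi (\sum_(i <- r) f i) = \prod_(i <- r) expi (f i).
Proof.
elim: r => [|x r IH]; first by rewrite !big_nil expi0.
by rewrite !big_cons expiD IH.
Qed.

Lemma expi_neq0 (x : R) : expi x != 0.
Proof. by apply: contra_eq_neq (expiD x (- x)) => ->; rewrite mul0r subrr expi0 oner_neq0. Qed.

Lemma expiMn (x : R) (n : nat) : expi (x *+ n) = expi x ^+ n.
Proof. by elim: n => [|n IH]; rewrite ?mulr0n ?expi0 // mulrS expiD IH exprS. Qed.

Lemma expi_nat (n : nat) : expi (n%:R : R) = 1.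
Proof.
have two_pi_n (f : R -> R) : periodic f (pi *+ 2) -> f ((pi *+ 2) *+ n) = f 0.
  by move=> f_per; rewrite -[X in f X]add0r periodicn.
rewrite /expi mulr_natr.
have -> : (2 * pi : R) = pi *+ 2 by rewrite mulr_natl.
by rewrite (two_pi_n _ (@cosD2pi R)) (two_pi_n _ (@sinD2pi R)) cos0 sin0.
Qed.

Lemma expi_ratio (k M : nat) : expi (k%:R / M%:R : R) = expi (M%:R^-1) ^+ k.
Proof. by rewrite -expiMn mulrC mulr_natr. Qed.

Lemma expi_neq1 (t : R) : 0 < t < 1 -> expi t != 1.
Proof.
move=> /andP[t_gt0 t_lt1]; rewrite /expi eq_complex /= negb_and.
have -> : 2 * pi * t = (pi * t) *+ 2 by rewrite mulr2n -mulrA mulrDl mul1r.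
have sin_gt0 : 0 < sin (pi * t).
  by apply: sin_gt0_pi; rewrite mulr_gt0 ?pi_gt0 //= gtr_pMr ?pi_gt0.
rewrite cos_mulr2n sin_mulr2n mulrn_eq0 /= mulf_eq0 (gt_eqF sin_gt0) /=.
apply/orP; have [cos0|cos_neq0] := eqVneq (cos (pi * t)) 0; last by right; rewrite orbF.
by left; rewrite cos0 expr0n /= mul0rn sub0r; lra.
Qed.
End Expi.

Lemma expi_inv_prim_root (R : realType) (M : nat) :
  (0 < M)%N -> M.-primitive_root (expi (M%:R^-1 : R)).
Proof.
move=> M_gt0; apply/andP; split => //; apply/forallP => i.
rewrite unity_rootE -expi_ratio.
have [->|i_neqM] := eqVneq i.+1 M.
  by rewrite mulfV ?pnatr_eq0 -?lt0n // (expi_nat _ 1) !eqxx.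
rewrite (negPf (expi_neq1 _)) ?eq_sym ?(negPf i_neqM) //.
rewrite divr_gt0 ?ltr0n //= ltr_pdivrMr ?ltr0n // mul1r ltr_nat.
by rewrite ltn_neqAle i_neqM ltn_ord.
Qed.

Section RootsOfUnity.
Variable F : fieldType.

Lemma prim_root_prime_divisors (z : F) n : (0 < n)%N -> z ^+ n = 1 ->
  (forall p, prime p -> (p %| n)%N -> z ^+ (n %/ p) != 1) -> n.-primitive_root z.
Proof.
move=> n_gt0 zn_1 z_prime_quot; have [m z_prim m_dvd_n] := prim_order_exists n_gt0 zn_1.
have [<- //|m_neq_n] := eqVneq m n.
have m_gt0 := prim_order_gt0 z_prim.
have quot_gt1 : (1 < n %/ m)%N.
  by rewrite ltn_divRL // mul1n ltn_neqAle m_neq_n dvdn_leq.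
have p_prime := pdiv_prime quot_gt1; have p_dvd_quot := pdiv_dvd (n %/ m).
set p := pdiv _ in p_prime p_dvd_quot.
have p_dvd_n : (p %| n)%N by rewrite -(divnK m_dvd_n) dvdn_mulr.
have : (m %| n %/ p)%N.
  by rewrite -(divnK m_dvd_n) -(divnK p_dvd_quot) mulnAC mulnK ?prime_gt0 ?dvdn_mull.
by rewrite (prim_order_dvd z_prim) (negPf (z_prime_quot p p_prime p_dvd_n)).
Qed.

Lemma Cyclotomic_root_unity d (z : F) : (0 < d)%N ->
  root (map_poly intr 'Phi_d) z -> z ^+ d = 1.
Proof.
move=> d_gt0 z_root; have := prod_Cyclotomic d_gt0.
rewrite (big_rem d) -?dvdn_divisors // => /(congr1 (map_poly (intr : int -> F))).
rewrite rmorphM rmorphB /= rmorph1 map_polyXn => /(congr1 (horner^~ z)).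
by rewrite hornerM (eqP z_root) mul0r !hornerE => /esym/eqP; rewrite subr_eq0 => /eqP.
Qed.

Lemma Cyclotomic_prim_root n (z : F) : n.-primitive_root z ->
  root (map_poly intr 'Phi_n) z.
Proof.
move=> z_prim; have n_gt0 := prim_order_gt0 z_prim.
have := prod_Cyclotomic n_gt0 => /(congr1 (map_poly (intr : int -> F))).
rewrite rmorph_prod rmorphB /= rmorph1 map_polyXn => /(congr1 (horner^~ z)).
rewrite horner_prod !hornerE prim_expr_order // subrr => /esym/eqP.
rewrite eq_sym prodf_seq_eq0 => /hasP[d]; rewrite -dvdn_divisors // => d_dvd_n /= z_root.
have d_gt0 : (0 < d)%N by apply: dvdn_gt0 d_dvd_n.
have n_dvd_d : (n %| d)%N.
  by rewrite (prim_order_dvd z_prim) (Cyclotomic_root_unity d_gt0 z_root).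
by have /eqP-> : n == d by rewrite eqn_dvd n_dvd_d.
Qed.
End RootsOfUnity.

Section IntegerCyclotomics.
Local Notation ZtoQ := (intr : int -> rat).

Lemma dvdp_map_intr_rat (d P : {poly int}) : d \is monic ->
  (map_poly ZtoQ d %| map_poly ZtoQ P) = (d %| P).
Proof.
move=> d_monic; apply/idP/idP => [dvd_Q|/(Pdiv.IdomainMonic.dvdpP d_monic)[q ->]];
  last by rewrite rmorphM /= dvdp_mull.
apply/modp_eq0P; have P_eq := Pdiv.IdomainMonic.divp_eq d_monic P.
set r := P %% d in P_eq *; have [//|r_neq0] := eqVneq r 0.
have size_map := size_map_inj_poly (@intr_inj rat).
have : map_poly ZtoQ d %| map_poly ZtoQ r.
  have -> : map_poly ZtoQ r = map_poly ZtoQ P - map_poly ZtoQ (P %/ d) * map_poly ZtoQ d.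
    by rewrite {1}P_eq rmorphD rmorphM /= addrC addKr.
  by rewrite dvdp_sub // dvdp_mull.
have r_map_neq0 : map_poly ZtoQ r != 0 by rewrite -size_poly_eq0 size_map ?size_poly_eq0.
move/(dvdp_leq r_map_neq0); rewrite !size_map // leqNgt.
by rewrite ltn_modp (monic_neq0 d_monic).
Qed.

Lemma map_intr_rat (F : numFieldType) (P : {poly int}) :
  map_poly (ratr : rat -> F) (map_poly ZtoQ P) = map_poly intr P.
Proof. by rewrite -map_poly_comp; apply: eq_map_poly => x /=; rewrite rmorph_int. Qed.

(* Over Q, [Phi_n] is the minimal polynomial of every primitive n-th root, so it
   divides any polynomial that has one of them as a root. *)
Lemma Cyclotomic_dvd_prim_root (F : numFieldType) n (z : F) (P : {poly int}) :
  n.-primitive_root z -> root (map_poly intr P) z -> 'Phi_n %| P.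
Proof.
move=> z_prim z_root; rewrite -dvdp_map_intr_rat ?Cyclotomic_monic //.
set PQ := map_poly ZtoQ P; set FQ := map_poly ZtoQ 'Phi_n.
have n_gt0 := prim_order_gt0 z_prim.
have not_coprime : ~~ coprimep PQ FQ.
  apply: contraL (Cyclotomic_prim_root z_prim) => PQ_FQ_coprime.
  have := coprimep_map (ratr : {rmorphism rat -> F}) PQ FQ.
  by rewrite PQ_FQ_coprime !map_intr_rat => /coprimep_root /(_ z_root).
set g := gcdp PQ FQ; have [z' z'_prim] := C_prim_root_exists n_gt0.
have [w w_root] : exists w : algC, root (map_poly ratr g) w.
  by apply/closed_rootP; rewrite size_map_poly.
have FQ_C : map_poly ratr FQ = cyclotomic z' n.
  by rewrite map_intr_rat (Cintr_Cyclotomic z'_prim).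
have w_prim : n.-primitive_root w.
  rewrite -(root_cyclotomic z'_prim) -FQ_C.
  have /Pdiv.Field.dvdpP [q ->] : g %| FQ by apply: dvdp_gcdr.
  by rewrite rmorphM rootM w_root orbT.
have [pw [pw_map _] pw_min] := minCpolyP w.
have <- : pw = FQ.
  apply: (map_inj_poly (fmorph_inj (ratr : {rmorphism rat -> algC}))); first by rewrite rmorph0.
  by rewrite -pw_map (minCpoly_cyclotomic w_prim) FQ_C -(Cintr_Cyclotomic w_prim)
    -(Cintr_Cyclotomic z'_prim).
by apply: dvdp_trans (dvdp_gcdl PQ FQ); rewrite -pw_min w_root.
Qed.

Lemma monic_prod_Cyclotomic (S : seq nat) : \prod_(s <- S) 'Phi_s \is monic.
Proof. by apply: monic_prod => s _; apply: Cyclotomic_monic. Qed.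

Lemma prod_Cyclotomic_dvd_Xn_sub1 (L : nat) (S : seq nat) : (0 < L)%N -> uniq S ->
  (forall s, s \in S -> (s %| L)%N) -> \prod_(s <- S) 'Phi_s %| 'X^L - 1.
Proof.
move=> L_gt0 uS S_dvd_L; rewrite -prod_Cyclotomic //.
have divisors_split : perm_eq (divisors L) (S ++ [seq d <- divisors L | d \notin S]).
  apply: uniq_perm; first exact: divisors_uniq.
    rewrite cat_uniq uS filter_uniq ?divisors_uniq //= andbT.
    by apply/hasPn => d; rewrite mem_filter => /andP[].
  move=> d; rewrite mem_cat mem_filter -dvdn_divisors //.
  by case: (boolP (d \in S)) => dS /=; rewrite ?(S_dvd_L _ dS).
by rewrite (perm_big _ divisors_split) big_cat /= dvdp_mulr.
Qed.

(* Distinct cyclotomic factors are coprime over Q, since they divide the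
   separable polynomial X^L - 1, L the product of their indices. *)
Lemma prod_Cyclotomic_dvd (S : seq nat) (P : {poly int}) : uniq S ->
  (forall s, s \in S -> (0 < s)%N /\ 'Phi_s %| P) -> \prod_(s <- S) 'Phi_s %| P.
Proof.
elim: S => [|s S IH]; first by rewrite big_nil dvd1p.
rewrite cons_uniq => /andP[s_notin_S uS] S_dvd.
have [s_gt0 Phi_s_dvd] := S_dvd s (mem_head s S).
have S_dvd' t : t \in S -> (0 < t)%N /\ 'Phi_t %| P.
  by move=> tS; apply: S_dvd; rewrite in_cons tS orbT.
set L := (\prod_(t <- s :: S) t)%N.
have L_gt0 : (0 < L)%N.
  by rewrite /L big_seq_cond prodn_cond_gt0 // => t /andP[/S_dvd[]].
have : map_poly ZtoQ (\prod_(t <- s :: S) 'Phi_t) %| map_poly ZtoQ ('X^L - 1).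
  rewrite dvdp_map_intr_rat ?monic_prod_Cyclotomic //.
  apply: prod_Cyclotomic_dvd_Xn_sub1; rewrite //= ?s_notin_S //.
  by move=> t tS; rewrite /L (big_rem t tS) dvdn_mulr.
have Xn_sub1_separable : separable_poly (map_poly ZtoQ ('X^L - 1)).
  by rewrite rmorphB rmorph1 /= map_polyXn separable_Xn_sub_1 // pnatr_eq0 -lt0n.
move/dvdp_separable/(_ Xn_sub1_separable).
rewrite big_cons rmorphM separable_mul => /and3P[_ _ coprime_factors].
rewrite -dvdp_map_intr_rat ?monicMl ?Cyclotomic_monic ?monic_prod_Cyclotomic //.
rewrite rmorphM Gauss_dvdp //.
by rewrite !dvdp_map_intr_rat ?Cyclotomic_monic ?monic_prod_Cyclotomic // Phi_s_dvd (IH uS S_dvd').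
Qed.
End IntegerCyclotomics.

Definition prime_powerb (s : nat) := (1 < s)%N && (s == pdiv s ^ logn (pdiv s) s)%N.

Lemma prime_powerP s : reflect (prime_power s) (prime_powerb s).
Proof.
apply: (iffP andP) => [[s_gt1 /eqP s_eq]|[p [[|b] [p_prime // _ ->]]]].
  exists (pdiv s), (logn (pdiv s) s); split => //; first exact: pdiv_prime.
  by rewrite logn_gt0 mem_primes pdiv_prime //= pdiv_dvd andbT ltnW.
rewrite pdiv_pfactor // pfactorK //; split => //.
by rewrite -{1}(expn0 p) ltn_exp2l ?prime_gt1.
Qed.

Lemma prime_power_pdiv s : prime_power s ->
  exists2 b, prime (pdiv s) & s = (pdiv s ^ b.+1)%N.
Proof.
by case=> p [[|b] [p_prime // _ ->]]; exists b; rewrite pdiv_pfactor.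
Qed.

Lemma prime_power_logn t : prime_power t ->
  [/\ prime (pdiv t), (0 < logn (pdiv t) t)%N & t = (pdiv t ^ logn (pdiv t) t)%N].
Proof. by case=> p [[|b] [p_prime // _ ->]]; rewrite pdiv_pfactor // pfactorK. Qed.

Lemma prime_power_gt1 s : prime_power s -> (1 < s)%N.
Proof. by case/prime_powerP/andP. Qed.

Lemma Cyclotomic_pfactor_at1 p b : prime p -> ('Phi_(p ^ b.+1)).[1] = p%:R.
Proof.
move=> p_prime; set m := (p ^ b)%N; have p_gt1 := prime_gt1 p_prime.
have m_gt0 : (0 < m)%N by rewrite expn_gt0 ltnW.
have pm_gt0 : (0 < p ^ b.+1)%N by rewrite expn_gt0 ltnW.
have proper_divisors : perm_eq (rem (p ^ b.+1)%N (divisors (p ^ b.+1))) (divisors m).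
  apply: uniq_perm; rewrite ?rem_uniq ?divisors_uniq // => d.
  rewrite mem_rem_uniq ?divisors_uniq // inE -!dvdn_divisors //.
  apply/andP/idP => [[d_neq /(dvdn_pfactor _ _ p_prime)[k k_le d_eq]]|d_dvd_m].
    subst d; rewrite dvdn_Pexp2l //; have [k_eq|k_neq] := eqVneq k b.+1.
      by rewrite k_eq eqxx in d_neq.
    lia.
  split; last by rewrite (dvdn_trans d_dvd_m) ?dvdn_exp2l.
  by rewrite neq_ltn (leq_ltn_trans (dvdn_leq m_gt0 d_dvd_m)) ?ltn_exp2l.
have := prod_Cyclotomic pm_gt0; rewrite (big_rem (p ^ b.+1)%N) -?dvdn_divisors //.
have Xpm_factor : 'X^(p ^ b.+1) - 1 = ('X^m - 1) * \sum_(i < p) ('X^m) ^+ i :> {poly int}.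
  by rewrite -subrX1 -exprM expnSr.
have Xm_sub1_neq0 : 'X^m - 1 != 0 :> {poly int} by rewrite -size_poly_eq0 size_XnsubC.
rewrite (perm_big _ proper_divisors) /= prod_Cyclotomic // Xpm_factor mulrC.
move/(mulfI Xm_sub1_neq0)->.
rewrite horner_sum; under eq_bigr => i _ do rewrite -exprM hornerXn expr1n.
by rewrite sumr_const card_ord.
Qed.

Lemma Cyclotomic_prime_power_at1 s : prime_power s -> ('Phi_s).[1] = (pdiv s)%:R.
Proof. by case/prime_power_pdiv=> b p_prime {1}->; apply: Cyclotomic_pfactor_at1. Qed.

Lemma dvdn_prod_subset (T : eqType) (f : T -> nat) (L S : seq T) :
  uniq L -> uniq S -> {subset L <= S} -> (\prod_(s <- L) f s %| \prod_(s <- S) f s)%N.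
Proof. exact: (uniq_sub_le_big dvdnn (fun x y => dvdn_mulr y (dvdnn x))). Qed.

Lemma prod_Cyclotomic_prime_power_at1 (S : seq nat) :
  (forall s, s \in S -> prime_power s) ->
  \prod_(s <- S) ('Phi_s).[1] = (\prod_(s <- S) pdiv s)%:R.
Proof.
move=> S_pp; rewrite natr_prod; apply: eq_big_seq => s sS.
exact/Cyclotomic_prime_power_at1/S_pp.
Qed.

Lemma Apoly_at1 (A : seq nat) : (Apoly A).[1] = (size A)%:R.
Proof.
rewrite /Apoly; elim: A => [|a A IH]; first by rewrite big_nil hornerC.
by rewrite big_cons hornerD IH hornerXn expr1n /= -add1n natrD.
Qed.

Lemma Aeval_Apoly (R : realType) (A : seq nat) (z : R[i]) :
  Aeval A z = (map_poly intr (Apoly A)).[z].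
Proof.
rewrite /Aeval /Apoly rmorph_sum horner_sum; apply: eq_bigr => a _.
by rewrite /= map_polyXn hornerXn.
Qed.

Lemma Aeval_prim_root (R : realType) (A : seq nat) n (z : R[i]) :
  n.-primitive_root z -> 'Phi_n %| Apoly A -> Aeval A z = 0.
Proof.
move=> z_prim; rewrite Aeval_Apoly => /(Pdiv.IdomainMonic.dvdpP (Cyclotomic_monic n))[q ->].
by rewrite rmorphM hornerM (eqP (Cyclotomic_prim_root z_prim)) mulr0.
Qed.

Lemma Cyclotomic_dvd_Apoly (R : realType) (A : seq nat) n (z : R[i]) :
  n.-primitive_root z -> Aeval A z = 0 -> 'Phi_n %| Apoly A.
Proof.
move=> z_prim z_root; apply: (Cyclotomic_dvd_prim_root z_prim).
by rewrite /root -Aeval_Apoly z_root.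
Qed.

(* The cyclotomic factors of [A] have degree [totient s >= s / 2] and at most
   [deg A], which bounds [S_A]. *)
Lemma in_SA_lt (A : seq nat) s : (0 < size A)%N -> in_SA A s ->
  (s < (size (Apoly A)).*2.+1)%N.
Proof.
move=> A_gt0 [s_pp Phi_s_dvd]; have [b p_prime s_eq] := prime_power_pdiv s_pp.
have Apoly_neq0 : Apoly A != 0.
  by apply: contra_eqN (Apoly_at1 A) => /eqP->; rewrite hornerC eq_sym pnatr_eq0 -lt0n.
have := dvdp_leq Apoly_neq0 Phi_s_dvd; rewrite size_Cyclotomic s_eq totient_pfactor //.
rewrite expnS /=; move: (size _) (prime_gt1 p_prime) (pdiv s ^ b)%N => deg.
move: (pdiv s) => p p_gt1 r; nia.
Qed.

Definition SA_seq (A : seq nat) : seq nat :=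
  [seq s <- iota 0 (size (Apoly A)).*2.+1 | prime_powerb s && ('Phi_s %| Apoly A)].

Lemma uniq_SA_seq A : uniq (SA_seq A).
Proof. by rewrite filter_uniq ?iota_uniq. Qed.

Lemma mem_SA_seq A s : (0 < size A)%N -> s \in SA_seq A <-> in_SA A s.
Proof.
move=> A_gt0; rewrite mem_filter mem_iota /= add0n; split.
  by case/andP=> /andP[/prime_powerP] *; split.
by move=> s_SA; have [/prime_powerP-> ->] := s_SA; rewrite in_SA_lt.
Qed.

Lemma prod_pdiv_dvd_size (A : seq nat) (S : seq nat) : uniq S ->
  (forall s, s \in S -> in_SA A s) -> (\prod_(s <- S) pdiv s %| size A)%N.
Proof.
move=> uS S_SA; have S_pp s : s \in S -> prime_power s by case/S_SA.
have /(Pdiv.IdomainMonic.dvdpP (monic_prod_Cyclotomic S))[q Apoly_eq] :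
    \prod_(s <- S) 'Phi_s %| Apoly A.
  apply: prod_Cyclotomic_dvd => // s sS; split; last by case: (S_SA s sS).
  exact/ltnW/prime_power_gt1/S_pp.
have := congr1 (horner^~ 1) Apoly_eq.
rewrite hornerM horner_prod prod_Cyclotomic_prime_power_at1 // Apoly_at1 => size_eq.
suff : ((\prod_(s <- S) pdiv s)%:Z %| (size A)%:Z)%Z by [].
by apply/dvdzP; exists q.[1]; rewrite -!natz.
Qed.

Section NatArithmetic.
Local Open Scope nat_scope.

Lemma modn_divn_neq p d a b : 0 < p -> a = b %[mod d] -> a != b %[mod p * d] ->
  (a %/ d) %% p != (b %/ d) %% p.
Proof.
move=> p_gt0 eq_mod_d; apply: contra => /eqP eq_digit.
rewrite !modn_divl in eq_digit.
have eq_low : (a %% (p * d)) %% d = (b %% (p * d)) %% d.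
  by rewrite !modn_dvdm ?dvdn_mull.
by apply/eqP; rewrite (divn_eq (a %% (p * d)) d) (divn_eq (b %% (p * d)) d) eq_digit eq_low.
Qed.

Lemma dvdn_shift_subE d Q a b : d %| Q -> b <= a + Q -> (d %| a + Q - b) = (a == b %[mod d]).
Proof. by move=> d_dvd_Q b_le; rewrite -eqn_mod_dvd // -modnDmr (eqP d_dvd_Q) addn0. Qed.

(* [p ^ al / gcd (a - b, p ^ al)], the order of [zeta ^ (a - b)] for a
   primitive [p ^ al]-th root [zeta], is [p ^ (al - v)] with [v] the [p]-adic
   valuation of [a - b], i.e. the first base-[p] digit where [a] and [b] differ. *)
Lemma order_pfactor_digit p al a b : prime p -> a < p ^ al -> b < p ^ al -> a != b ->
  exists v, [/\ v < al, p ^ al %/ gcdn (a + p ^ al - b) (p ^ al) = p ^ (al - v) &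
    (a %/ p ^ v) %% p != (b %/ p ^ v) %% p].
Proof.
move=> p_prime a_lt b_lt a_neq_b; set Q := p ^ al; set k := a + Q - b.
have p_gt1 := prime_gt1 p_prime; have p_gt0 := prime_gt0 p_prime.
have /(dvdn_pfactor _ _ p_prime)[v v_le gcd_eq] : gcdn k Q %| Q by apply: dvdn_gcdr.
have pv_dvd_k : p ^ v %| k by rewrite -gcd_eq dvdn_gcdl.
have v_lt : v < al.
  rewrite ltn_neqAle v_le andbT; apply: contraTneq pv_dvd_k => ->.
  by apply/negP => /dvdnP[[|[|c]] k_eq]; move: k_eq; rewrite /k; nia.
exists v; split => //; first by rewrite gcd_eq /Q expnB // ltnW.
apply: modn_divn_neq => //.
  by apply/eqP; rewrite -(dvdn_shift_subE (dvdn_exp2l p (ltnW v_lt))) //; lia.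
rewrite -expnS -(dvdn_shift_subE (dvdn_exp2l p v_lt)); last by lia.
apply/negP => pv1_dvd_k.
have : p ^ v.+1 %| gcdn k Q by rewrite dvdn_gcd pv1_dvd_k dvdn_exp2l.
by rewrite gcd_eq dvdn_Pexp2l // ltnn.
Qed.

Lemma ndvdn_shift_digits p T a b : p %| T -> 0 < T -> a < p -> b < p -> a != b ->
  ~~ (p %| a + T - b).
Proof.
move=> p_dvd_T T_gt0 a_lt b_lt a_neq_b; have p_le_T := dvdn_leq T_gt0 p_dvd_T.
have -> : a + T - b = (a + p - b) + (T - p) by lia.
rewrite dvdn_addl; last by rewrite dvdn_sub ?dvdnn.
by apply/negP => /dvdnP[[|[|c]] eq_c]; lia.
Qed.

Lemma prime_power_dvdE s t : prime_power s -> prime_power t -> pdiv s = pdiv t ->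
  (s %| t) = (s <= t).
Proof.
case=> p [[|b] [p_prime // _ ->]] [q [[|c] [q_prime // _ ->]]].
by rewrite !pdiv_pfactor // => <-; rewrite dvdn_Pexp2l ?leq_exp2l ?prime_gt1.
Qed.

Lemma prime_power_dvd_divp s t : prime_power s -> prime_power t -> pdiv s = pdiv t ->
  s < t -> s %| t %/ pdiv t.
Proof.
case=> p [[|b] [p_prime // _ ->]] [q [[|c] [q_prime // _ ->]]].
rewrite !pdiv_pfactor // => <-; rewrite ltn_exp2l ?prime_gt1 // => b_lt_c.
by rewrite [p ^ c.+1]expnS mulKn ?prime_gt0 // dvdn_exp2l.
Qed.

Lemma prime_power_pdivE p t : prime_power t -> prime p -> p %| t -> pdiv t = p.
Proof.
case=> q [[|c] [q_prime // _ ->]] p_prime; rewrite pdiv_pfactor //.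
by rewrite Euclid_dvdX // => /andP[p_dvd_q _]; apply/eqP; rewrite eq_sym -dvdn_prime2.
Qed.

End NatArithmetic.

Section LeadingPrimePowers.
Local Open Scope nat_scope.
Variables (S : seq nat) (D : pred nat).
Hypothesis S_uniq : uniq S.
Hypothesis S_pp : forall s, s \in S -> prime_power s.

Definition leading_in t :=
  [&& t \in S, D t & all (fun u => (pdiv u == pdiv t) && D u ==> (u <= t)) S].

Definition leading := [seq t <- S | leading_in t].

Definition leading_prod := \prod_(t <- leading) t.

Lemma mem_leading t : (t \in leading) = leading_in t.
Proof. by rewrite mem_filter andb_idr // => /and3P[]. Qed.

Lemma leading_inS t : leading_in t -> t \in S.
Proof. by case/and3P. Qed.

Lemma leading_exists s : s \in S -> D s ->
  exists2 t, leading_in t & pdiv t = pdiv s /\ s <= t.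
Proof.
move=> sS Ds; pose P u := [&& u \in S, pdiv u == pdiv s & D u].
have P_s : exists u, P u by exists s; rewrite /P sS eqxx Ds.
have P_bounded u : P u -> u <= \sum_(x <- S) x.
  by case/and3P=> uS _ _; rewrite (big_rem u uS) leq_addr.
have [t /and3P[tS /eqP t_p Dt] t_max] := ex_maxnP P_s P_bounded.
exists t; last by split; rewrite // t_max // /P sS eqxx Ds.
rewrite /leading_in tS Dt; apply/allP => u uS; apply/implyP => /andP[/eqP u_p Du].
by apply: t_max; rewrite /P uS u_p t_p eqxx Du.
Qed.

Lemma leading_inj t t' : leading_in t -> leading_in t' -> pdiv t = pdiv t' -> t = t'.
Proof.
move=> /and3P[tS Dt /allP t_max] /and3P[t'S Dt' /allP t'_max] same_p.
apply/eqP; rewrite eqn_leq.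
have := t'_max t tS; rewrite same_p eqxx Dt /= => ->.
by have := t_max t' t'S; rewrite same_p eqxx Dt' /= => ->.
Qed.

Lemma leading_prod_gt0 : 0 < leading_prod.
Proof.
rewrite /leading_prod big_seq_cond prodn_cond_gt0 // => t /andP[].
by rewrite mem_leading => /leading_inS/S_pp/prime_power_gt1/ltnW.
Qed.

Lemma dvdn_leading_prod s : s \in S -> D s -> s %| leading_prod.
Proof.
move=> sS Ds; have [t t_lead [same_p s_le_t]] := leading_exists sS Ds.
have tS := leading_inS t_lead; rewrite -mem_leading in t_lead.
apply: dvdn_trans (_ : t %| _); first by rewrite (prime_power_dvdE (S_pp sS) (S_pp tS)).
by rewrite /leading_prod (big_rem t t_lead) dvdn_mulr.
Qed.

Lemma leading_prod_gt1 : has D S -> 1 < leading_prod.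
Proof.
case/hasP=> s sS Ds; apply: leq_trans (prime_power_gt1 (S_pp sS)) _.
exact: dvdn_leq leading_prod_gt0 (dvdn_leading_prod sS Ds).
Qed.

Lemma leading_of_prime p : prime p -> p %| leading_prod ->
  exists2 tp, leading_in tp & pdiv tp = p.
Proof.
move=> p_prime; rewrite /leading_prod (Euclid_dvd_prod _ _ _ p_prime) big_has.
case/hasP=> t; rewrite mem_leading => t_lead p_dvd_t; exists t => //.
exact: prime_power_pdivE (S_pp (leading_inS t_lead)) p_prime p_dvd_t.
Qed.

Section LeadingAt.
Variable tp : nat.
Hypothesis tp_lead : leading_in tp.
Let p := pdiv tp.
Let p_prime : prime p.
Proof. by have [? ->] := prime_power_pdiv (S_pp (leading_inS tp_lead)). Qed.

Let tpS := leading_inS tp_lead.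

(* Leading elements have pairwise distinct primes, so [tp] carries the whole
   [p]-part of [leading_prod]. *)
Lemma leading_prod_split :
  leading_prod = tp * \prod_(t <- leading | t != tp) t /\
  ~~ (p %| \prod_(t <- leading | t != tp) t).
Proof.
split; first by rewrite /leading_prod (bigD1_seq tp) ?mem_leading ?filter_uniq.
rewrite (Euclid_dvd_prod _ _ _ p_prime) big_has_cond; apply/hasPn => t.
rewrite mem_leading => t_lead; apply/negP => /andP[t_neq p_dvd_t].
have t_p := prime_power_pdivE (S_pp (leading_inS t_lead)) p_prime p_dvd_t.
by move: t_neq; rewrite (leading_inj t_lead tp_lead t_p) eqxx.
Qed.

Lemma dvdn_leading_prod_divp s : s \in S -> D s -> s != tp -> s %| leading_prod %/ p.
Proof.
move=> sS Ds s_neq; have [t t_lead [same_p s_le_t]] := leading_exists sS Ds.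
have tS := leading_inS t_lead; have [p_t|p_t] := eqVneq (pdiv s) p.
  have t_eq : t = tp by apply: leading_inj; rewrite // same_p p_t.
  have [-> _] := leading_prod_split; rewrite -/p.
  rewrite -divn_mulAC ?pdiv_dvd //; apply: dvdn_mulr.
  apply: prime_power_dvd_divp; [exact: S_pp | exact: S_pp tpS | by [] |].
  by rewrite ltn_neqAle s_neq -t_eq.
have t_coprime_p : coprime t p.
  rewrite coprime_sym prime_coprime //; apply: contra p_t => p_dvd_t.
  by rewrite -same_p (prime_power_pdivE (S_pp tS) p_prime p_dvd_t).
have p_dvd : p %| leading_prod.
  by have [-> _] := leading_prod_split; rewrite dvdn_mulr // pdiv_dvd.
apply: dvdn_trans (_ : t %| _); first by rewrite (prime_power_dvdE (S_pp sS) (S_pp tS)).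
rewrite -(Gauss_dvdr _ t_coprime_p) mulnC divnK //.
by rewrite /leading_prod (big_rem t) ?mem_leading // dvdn_mulr.
Qed.
End LeadingAt.

End LeadingPrimePowers.

Section PrimePowerRoots.
Variables (F : fieldType) (S : seq nat) (om : nat -> F) (e : nat -> nat).
Hypothesis S_uniq : uniq S.
Hypothesis S_pp : forall s, s \in S -> prime_power s.
Hypothesis om_prim : forall s, s \in S -> s.-primitive_root (om s).
Hypothesis e_unit_or_0 : forall s, s \in S -> (pdiv s %| e s)%N -> (s %| e s)%N.

Definition nonzero_exponent : pred nat := fun s => ~~ (pdiv s %| e s)%N.
Local Notation D := nonzero_exponent.

Let om_expr_eq1 s m : s \in S -> (s %| m)%N -> om s ^+ m = 1.
Proof. by move=> sS; rewrite (prim_order_dvd (om_prim sS)) => /eqP. Qed.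

(* The [p]-part of the order of the product is contributed by the largest [s]
   with [pdiv s = p] whose exponent is nonzero mod [p]. *)
Lemma prod_expr_prim_root :
  (leading_prod S D).-primitive_root (\prod_(s <- S) om s ^+ e s).
Proof.
apply: prim_root_prime_divisors; first exact: leading_prod_gt0.
  rewrite -prodrXl; apply: big1_seq => s /andP[_ sS]; rewrite -exprM om_expr_eq1 //.
  have [Ds|/negbNE] := boolP (D s); last by move/(e_unit_or_0 sS)/dvdn_mulr.
  exact/dvdn_mull/dvdn_leading_prod.
move=> p p_prime /(leading_of_prime S_pp p_prime)[tp tp_lead tp_p].
have tpS := leading_inS tp_lead; rewrite -tp_p.
rewrite -prodrXl (bigD1_seq tp) //= big1_seq ?mulr1; last first.
  move=> s /andP[s_neq sS]; rewrite -exprM om_expr_eq1 //.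
  have [Ds|/negbNE] := boolP (D s); last by move/(e_unit_or_0 sS)/dvdn_mulr.
  exact/dvdn_mull/dvdn_leading_prod_divp.
rewrite -exprM -(prim_order_dvd (om_prim tpS)).
have [-> R_coprime] := leading_prod_split S_uniq S_pp tp_lead.
have p_prime' : prime (pdiv tp) by rewrite tp_p.
rewrite -divn_mulAC ?pdiv_dvd //; set q := (tp %/ pdiv tp)%N.
have tp_gt0 : (0 < tp)%N := ltnW (prime_power_gt1 (S_pp tpS)).
have q_gt0 : (0 < q)%N by rewrite divn_gt0 ?pdiv_gt0 // (dvdn_leq tp_gt0 (pdiv_dvd tp)).
have {1}-> : tp = (q * pdiv tp)%N by rewrite divnK ?pdiv_dvd.
rewrite mulnCA dvdn_pmul2l // Euclid_dvdM // negb_or R_coprime andbT.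
by case/and3P: tp_lead => _ Dtp _.
Qed.
End PrimePowerRoots.

Lemma Cyclotomic_leading_prod_dvd (A S : seq nat) (D : pred nat) : uniq S ->
  (forall s, s \in S -> in_SA A s) -> T2 A -> has D S ->
  'Phi_(leading_prod S D) %| Apoly A.
Proof.
move=> S_uniq S_SA A_T2 /hasP[s sS Ds].
have S_pp t : t \in S -> prime_power t by case/S_SA.
set pb := [seq (pdiv t, logn (pdiv t) t) | t <- leading S D].
have -> : leading_prod S D = (\prod_(x <- pb) x.1 ^ x.2)%N.
  rewrite big_map; apply: eq_big_seq => t; rewrite mem_leading => /leading_inS tS.
  by have [_ _ <-] := prime_power_logn (S_pp t tS).
apply: A_T2.
- have [t t_lead _] := leading_exists sS Ds.
  rewrite -mem_leading in t_lead.
  by have := map_f (fun t => (pdiv t, logn (pdiv t) t)) t_lead; rewrite -/pb; case: pb.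
- rewrite -map_comp map_inj_in_uniq ?filter_uniq // => t t'; rewrite !mem_leading.
  exact: leading_inj.
move=> x /mapP[t]; rewrite mem_leading => /leading_inS tS -> /=.
by have [? ? t_eq] := prime_power_logn (S_pp t tS); rewrite -t_eq; split; last exact: S_SA.
Qed.

Section DigitVectors.
Variable base : nat -> nat.

Fixpoint digit_vectors (L : seq nat) : seq (seq nat) :=
  if L is s :: L' then [seq c :: u | c <- iota 0 (base s), u <- digit_vectors L']
  else [:: [::]].

Lemma size_digit_vectors L : size (digit_vectors L) = (\prod_(s <- L) base s)%N.
Proof.
elim: L => [|s L IH] /=; first by rewrite big_nil.
by rewrite size_allpairs size_iota IH big_cons.
Qed.

Lemma uniq_digit_vectors L : uniq (digit_vectors L).
Proof.
elim: L => [|s L IH] //=; rewrite allpairs_uniq ?iota_uniq //.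
by move=> [a u] [b w] _ _ /= [-> ->].
Qed.

Lemma mem_digit_vectors L v : v \in digit_vectors L ->
  size v = size L /\ forall i, (i < size L)%N -> (nth 0 v i < base (nth 0 L i))%N.
Proof.
elim: L v => [|s L IH] v /=; first by rewrite inE => /eqP->.
case/allpairsP => [[c u] /= [c_lt u_in ->]]; have [u_size u_lt] := IH u u_in.
split=> [|[|i]] /=; rewrite ?u_size // ?ltnS; last exact: u_lt.
by rewrite mem_iota in c_lt.
Qed.

Lemma digit_vectors_head L : (forall s, 0 < base s)%N ->
  digit_vectors L = nseq (size L) 0%N :: behead (digit_vectors L).
Proof.
move=> base_gt0; elim: L => [|s L IH] //=.
have -> : iota 0 (base s) = 0%N :: iota 1 (base s).-1 by case: (base s) (base_gt0 s).
by rewrite allpairs_cons IH.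
Qed.
End DigitVectors.

Section SpectrumConstruction.
Variables (R : realType) (S : seq nat).
Hypothesis S_uniq : uniq S.
Hypothesis S_pp : forall s, s \in S -> prime_power s.

Definition digit (v : seq nat) (s : nat) : nat := nth 0 v (index s S).

Let M := (\prod_(s <- S) s)%N.

(* The fractional part of [\sum_s digit v s / s], over the common denominator
   [M]. *)
Definition spectral_point (v : seq nat) : R :=
  ((\sum_(s <- S) digit v s * (M %/ s)) %% M)%N%:R / M%:R.

Local Notation om s := (expi (s%:R^-1 : R)).
Local Notation C := (digit_vectors pdiv S).

Let S_gt0 s : s \in S -> (0 < s)%N.
Proof. by move/S_pp/prime_power_gt1/ltnW. Qed.

Let M_gt0 : (0 < M)%N.
Proof. by rewrite /M big_seq_cond prodn_cond_gt0 // => s /andP[/S_gt0]. Qed.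

Lemma digit_lt v s : v \in C -> s \in S -> (digit v s < pdiv s)%N.
Proof.
move=> /mem_digit_vectors[_ v_lt] sS.
by have := v_lt (index s S); rewrite index_mem nth_index //; apply.
Qed.

Lemma spectral_point_ge0_lt1 v : 0 <= spectral_point v < 1.
Proof.
by rewrite divr_ge0 //= ltr_pdivrMr ?ltr0n // mul1r ltr_nat ltn_pmod.
Qed.

Lemma expi_spectral_point v : expi (spectral_point v) = \prod_(s <- S) om s ^+ digit v s.
Proof.
rewrite /spectral_point expi_ratio (prim_expr_mod (expi_inv_prim_root R M_gt0)) -expi_ratio.
rewrite natr_sum mulr_suml expi_sum; apply: eq_big_seq => s sS.
have s_dvd_M : (s %| M)%N by rewrite /M (big_rem s sS) dvdn_mulr.
have s_neq0 : s%:R != 0 :> R by rewrite pnatr_eq0 -lt0n S_gt0.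
have M_neq0 : M%:R != 0 :> R by rewrite pnatr_eq0 -lt0n.
rewrite natrM natf_div // -expi_ratio; congr expi.
by field; rewrite s_neq0 M_neq0.
Qed.

Lemma expi_spectral_point_sub v w : w \in C ->
  expi (spectral_point v - spectral_point w) =
  \prod_(s <- S) om s ^+ (digit v s + s - digit w s).
Proof.
move=> wC; apply: (mulIf (expi_neq0 (spectral_point w))).
rewrite -expiD subrK !expi_spectral_point -big_split; apply: eq_big_seq => s sS /=.
have dw_le_s : (digit w s <= s)%N.
  by rewrite ltnW // (leq_trans (digit_lt wC sS)) // pdiv_leq ?S_gt0.
rewrite -exprD subnK; last exact: leq_trans dw_le_s (leq_addl _ _).
by rewrite exprD (prim_expr_order (expi_inv_prim_root R (S_gt0 sS))) mulr1.
Qed.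

Lemma digit_vectors_neq v w : v \in C -> w \in C -> v != w ->
  exists2 s, s \in S & digit v s != digit w s.
Proof.
move=> /mem_digit_vectors[v_size _] /mem_digit_vectors[w_size _] v_neq_w.
have [/existsP[i v_neq]|/existsPn v_eq] :=
  boolP [exists i : 'I_(size S), nth 0 v i != nth 0 w i].
  by exists (nth 0 S i); rewrite ?mem_nth // /digit index_uniq.
case/eqP: v_neq_w; apply: (@eq_from_nth _ 0); rewrite ?v_size ?w_size // => i i_lt.
by apply/eqP; have := v_eq (Ordinal i_lt); rewrite negbK.
Qed.

Lemma spectral_point_sub_prim_root v w : v \in C -> w \in C -> v != w ->
  exists2 D : pred nat, has D S &
    (leading_prod S D).-primitive_root (expi (spectral_point v - spectral_point w)).
Proof.
move=> vC wC v_neq_w; set e := fun s => (digit v s + s - digit w s)%N.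
have e_ndvd s : s \in S -> digit v s != digit w s -> ~~ (pdiv s %| e s)%N.
  move=> sS; apply: ndvdn_shift_digits; rewrite ?pdiv_dvd ?S_gt0 ?digit_lt //.
exists (nonzero_exponent e).
  by have [s sS neq] := digit_vectors_neq vC wC v_neq_w; apply/hasP; exists s => //; exact: e_ndvd.
rewrite expi_spectral_point_sub //; apply: prod_expr_prim_root => // s sS.
  exact/expi_inv_prim_root/S_gt0.
by have [eq_d|/(e_ndvd s sS)/negPf->//] := eqVneq (digit v s) (digit w s); rewrite /e eq_d addKn.
Qed.
End SpectrumConstruction.

Lemma spectral_point_nseq0 (R : realType) (S : seq nat) :
  spectral_point R S (nseq (size S) 0%N) = 0.
Proof.
rewrite /spectral_point big1_seq ?mod0n ?mul0r // => s _.
by rewrite /digit nth_nseq if_same mul0n.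
Qed.

Lemma prim_root_gt1_neq1 (F : fieldType) n (z : F) : (1 < n)%N ->
  n.-primitive_root z -> z != 1.
Proof.
move=> n_gt1 z_prim; apply: contraTneq n_gt1 => z_eq1.
by rewrite -leqNgt dvdn_leq // (prim_order_dvd z_prim) z_eq1 expr1n.
Qed.

Section T1T2Spectrum.
Variables (R : realType) (A S : seq nat).
Hypothesis S_uniq : uniq S.
Hypothesis S_SA : forall s, s \in S -> in_SA A s.
Hypothesis A_T2 : T2 A.

Local Notation C := (digit_vectors pdiv S).
Local Notation sp := (spectral_point R S).

Let S_pp s : s \in S -> prime_power s.
Proof. by case/S_SA. Qed.

Lemma spectral_point_sub_root v w : v \in C -> w \in C -> v != w ->
  Aeval A (expi (sp v - sp w)) = 0 /\ expi (sp v - sp w) != 1.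
Proof.
move=> vC wC v_neq_w.
have [D has_D prim] := spectral_point_sub_prim_root R S_uniq S_pp vC wC v_neq_w.
split; first by apply: Aeval_prim_root prim _; apply: Cyclotomic_leading_prod_dvd.
exact: prim_root_gt1_neq1 (leading_prod_gt1 S_pp has_D) prim.
Qed.

Lemma spectral_point_inj : {in C &, injective sp}.
Proof.
move=> v w vC wC sp_eq; apply/eqP; apply: contraT => v_neq_w.
by have [_] := spectral_point_sub_root vC wC v_neq_w; rewrite sp_eq subrr expi0 eqxx.
Qed.

Lemma spectral_points_spectrum : size A = (\prod_(s <- S) pdiv s)%N ->
  is_spectrum A [seq sp v | v <- behead C].
Proof.
move=> size_A; have C_eq := digit_vectors_head S (@pdiv_gt0).
have C_uniq := uniq_digit_vectors pdiv S; have C_size := size_digit_vectors pdiv S.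
have th_eq : 0 :: [seq sp v | v <- behead C] = map sp C.
  by rewrite [in RHS]C_eq /= spectral_point_nseq0.
have behead_C v : v \in behead C -> v \in C /\ v != nseq (size S) 0%N.
  move: C_uniq; rewrite C_eq /= => /andP[zero_notin _] vC.
  by split; [rewrite C_eq in_cons vC orbT | apply: contraNneq zero_notin => <-].
split.
- by rewrite size_map size_behead C_size size_A.
- by move: C_uniq; rewrite -(map_inj_in_uniq spectral_point_inj) -th_eq => /andP[].
- move=> _ /mapP[v /behead_C[vC v_neq0] ->].
  have /andP[sp_ge0 ->] := spectral_point_ge0_lt1 R S_pp v; rewrite andbT lt0r sp_ge0 andbT.
  rewrite -(spectral_point_nseq0 R S); apply: contra v_neq0 => /eqP/spectral_point_inj.
  by move=> /(_ vC); rewrite C_eq mem_head => /(_ isT)->.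
move=> i j i_lt j_lt i_neq_j; rewrite th_eq !(nth_map [::]) ?C_size -?size_A //.
by apply: (proj1 (spectral_point_sub_root _ _ _)); rewrite ?mem_nth ?nth_uniq ?C_size -?size_A.
Qed.
End T1T2Spectrum.

Lemma T1_T2_has_spectrum (R : realType) (A : seq nat) : T1 A -> T2 A -> has_spectrum R A.
Proof.
move=> [S [S_uniq S_SA A_at1]] A_T2.
have {}S_SA s : s \in S -> in_SA A s by move/S_SA.
have S_pp s : s \in S -> prime_power s by case/S_SA.
exists [seq spectral_point R S v | v <- behead (digit_vectors pdiv S)].
apply: spectral_points_spectrum => //; apply/eqP.
by rewrite -(eqr_nat int) -Apoly_at1 A_at1 prod_Cyclotomic_prime_power_at1.
Qed.

Section PrimePowerSpectrum.
Variables (R : realType) (A : seq nat) (p al : nat) (th : seq R).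
Hypothesis p_prime : prime p.
Hypothesis th_spectrum : is_spectrum A th.
Hypothesis th_grid : forall t, t \in th -> exists m : int, t = m%:~R / (p ^ al)%:R.

Let N := size A.
Let Q := (p ^ al)%N.
Let x i := nth 0 (0 :: th) i.
Let Q_gt0 : (0 < Q)%N. Proof. by rewrite expn_gt0 prime_gt0. Qed.
Let Q_neq0 : Q%:R != 0 :> R. Proof. by rewrite pnatr_eq0 -lt0n. Qed.

Definition grid_index i := `|Num.floor (x i * Q%:R)|%N.

Lemma grid_indexP i : (i < N)%N -> (grid_index i < Q)%N /\ x i = (grid_index i)%:R / Q%:R.
Proof.
move=> i_lt; have [th_size _ th_in01 _] := th_spectrum.
suff [n n_lt x_eq] : exists2 n, (n < Q)%N & x i = n%:R / Q%:R.
  by rewrite /grid_index x_eq mulfVK // -[n%:R]/((n%:Z)%:~R : R) intrKfloor.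
case: i i_lt => [|i] i_lt; first by exists 0%N; rewrite ?mul0r.
have ti : x i.+1 \in th by apply: mem_nth; rewrite th_size -ltnS prednK // (leq_ltn_trans _ i_lt).
have [m m_eq] := th_grid ti; have /andP[t_gt0 t_lt1] := th_in01 _ ti.
rewrite m_eq -/Q in t_gt0 t_lt1 *.
have m_gt0 : 0 < m by move: t_gt0; rewrite pmulr_lgt0 ?invr_gt0 ?ltr0n // ltr0z.
exists `|m|%N; last by rewrite -[`|m|%N%:R]/((`|m|%N%:Z)%:~R : R) gtz0_abs.
rewrite -ltz_nat gtz0_abs //.
by move: t_lt1; rewrite ltr_pdivrMr ?ltr0n // mul1r -[Q%:R]/((Q%:Z)%:~R : R) ltr_int.
Qed.

Lemma grid_index_inj i j : (i < N)%N -> (j < N)%N -> i != j ->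
  grid_index i != grid_index j.
Proof.
move=> i_lt j_lt; apply: contra_neq => index_eq.
have [th_size th_uniq th_in01 _] := th_spectrum.
have zero_th_uniq : uniq (0 :: th).
  by rewrite /= th_uniq andbT; apply/negP => /th_in01; rewrite ltxx.
have size_zero_th : size (0 :: th) = N by rewrite /= th_size prednK // (leq_ltn_trans _ i_lt).
apply/eqP; rewrite -(nth_uniq 0 _ _ zero_th_uniq) ?size_zero_th //; apply/eqP.
by rewrite -/(x i) -/(x j) (grid_indexP i_lt).2 (grid_indexP j_lt).2 index_eq.
Qed.

Lemma Cyclotomic_grid_dvd i j : (i < N)%N -> (j < N)%N -> i != j ->
  'Phi_(Q %/ gcdn (grid_index i + Q - grid_index j) Q) %| Apoly A.
Proof.
move=> i_lt j_lt i_neq_j; have [_ _ _ th_root] := th_spectrum.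
have [gi_lt xi_eq] := grid_indexP i_lt; have [gj_lt xj_eq] := grid_indexP j_lt.
apply: (Cyclotomic_dvd_Apoly (exp_prim_root (expi_inv_prim_root R Q_gt0) _)).
rewrite -expi_ratio natrB; last by rewrite (leq_trans (ltnW gj_lt)) ?leq_addl.
rewrite natrD mulrBl mulrDl mulfV // -xi_eq -xj_eq addrAC expiD (expi_nat _ 1) mulr1.
exact: th_root.
Qed.

Definition grid_levels := [seq v <- iota 0 al | 'Phi_(p ^ (al - v)) %| Apoly A].

Lemma grid_levels_lt v : v \in grid_levels -> (v < al)%N.
Proof. by rewrite mem_filter mem_iota => /andP[_ /andP[]]. Qed.

Lemma grid_index_digit_neq i j : (i < N)%N -> (j < N)%N -> i != j ->
  exists2 v, v \in grid_levels &
    ((grid_index i %/ p ^ v) %% p != (grid_index j %/ p ^ v) %% p)%N.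
Proof.
move=> i_lt j_lt i_neq_j; have [gi_lt _] := grid_indexP i_lt; have [gj_lt _] := grid_indexP j_lt.
have [v [v_lt order_eq digit_neq]] :=
  order_pfactor_digit p_prime gi_lt gj_lt (grid_index_inj i_lt j_lt i_neq_j).
exists v => //; rewrite mem_filter mem_iota /= v_lt andbT -order_eq.
exact: Cyclotomic_grid_dvd.
Qed.

(* Base-[p] digits at the levels [grid_levels] separate the points of the spectrum. *)
Lemma size_le_grid_levels : (N <= p ^ size grid_levels)%N.
Proof.
set T := grid_levels; have p_gt0 := prime_gt0 p_prime.
pose f (i : 'I_N) := [ffun t : 'I_(size T) =>
  Ordinal (ltn_pmod (grid_index i %/ p ^ nth 0%N T t) p_gt0)].
suff f_inj : injective f by have := leq_card f f_inj; rewrite card_ord card_ffun !card_ord.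
move=> i j f_eq; apply/val_inj/eqP; apply: contraT => i_neq_j.
have [v vT digit_neq] := grid_index_digit_neq (ltn_ord i) (ltn_ord j) i_neq_j.
have v_idx : (index v T < size T)%N by rewrite index_mem.
move/ffunP: f_eq => /(_ (Ordinal v_idx)); rewrite !ffunE => /(congr1 val) /=.
by rewrite nth_index // => digit_eq; rewrite digit_eq eqxx in digit_neq.
Qed.

Lemma expn_grid_levels_dvd : (0 < N)%N ->
  (p ^ size grid_levels %| \prod_(s <- SA_seq A) pdiv s)%N.
Proof.
move=> N_gt0; set L := [seq (p ^ (al - v))%N | v <- grid_levels].
have levels_uniq : uniq grid_levels by rewrite filter_uniq ?iota_uniq.
have <- : (\prod_(s <- L) pdiv s = p ^ size grid_levels)%N.
  rewrite big_map (eq_big_seq (fun=> p)) => [|v /grid_levels_lt v_lt]; last first.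
    by rewrite -(subnSK v_lt) pdiv_pfactor.
  by elim: grid_levels => [|v T IH]; rewrite ?big_nil ?big_cons ?IH ?expnS.
apply: dvdn_prod_subset; rewrite ?uniq_SA_seq //.
  rewrite map_inj_in_uniq // => v w /grid_levels_lt v_lt /grid_levels_lt w_lt.
  by move/(expnI (prime_gt1 p_prime)); lia.
move=> _ /mapP[v v_in ->]; apply/mem_SA_seq => //; split.
  by exists p, (al - v)%N; split => //; rewrite subn_gt0 grid_levels_lt.
by move: v_in; rewrite mem_filter => /andP[].
Qed.

Lemma grid_spectrum_size_T1 : (0 < N)%N -> (exists k, N = p ^ k)%N /\ T1 A.
Proof.
move=> N_gt0; set P := (\prod_(s <- SA_seq A) pdiv s)%N.
have P_dvd_N : (P %| N)%N.
  by apply: prod_pdiv_dvd_size (uniq_SA_seq A) _ => s /mem_SA_seq-/(_ N_gt0).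
have levels_dvd_P := expn_grid_levels_dvd N_gt0.
have N_le := size_le_grid_levels.
have N_eq : N = (p ^ size grid_levels)%N.
  by apply/eqP; rewrite eqn_leq N_le dvdn_leq // (dvdn_trans levels_dvd_P P_dvd_N).
split; first by exists (size grid_levels).
exists (SA_seq A); split; [exact: uniq_SA_seq | by move=> s; apply: mem_SA_seq |].
rewrite Apoly_at1 prod_Cyclotomic_prime_power_at1 => [|s /mem_SA_seq-/(_ N_gt0)[] //].
have P_gt0 : (0 < P)%N by rewrite lt0n; apply: contraTneq P_dvd_N => ->; rewrite dvd0n -lt0n.
by congr _%:R; apply/eqP; rewrite eq_sym eqn_leq dvdn_leq //= -/N N_eq dvdn_leq.
Qed.
End PrimePowerSpectrum.

Theorem mainTheorem1 (R : realType) (A : seq nat) :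
  uniq A -> (0 \in A)%N -> (2 <= size A)%N ->
  (T1 A -> T2 A -> has_spectrum R A) /\
  (forall (p alpha : nat) (th : seq R),
     prime p -> is_spectrum A th ->
     (forall t, t \in th -> exists m : int, t = m%:~R / (p ^ alpha)%:R) ->
     (exists k : nat, size A = (p ^ k)%N) /\ T1 A).
Proof.
move=> _ _ size_A_ge2; split; first exact: T1_T2_has_spectrum.
move=> p al th p_prime th_spectrum th_grid.
exact: grid_spectrum_size_T1 p_prime th_spectrum th_grid (ltnW size_A_ge2).
Qed.
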